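(* Assume a geometry $(\mathscr P,\mathscr L)$ satisfying axioms G1, G2, G3, L1, L2. Let $P$ be any point and $l$ any line. If $\neg(P\notin l)$, then $P\in l$.
   Context: Constructive setting: all reasoning is in Bishop-style constructive mathematics with intuitionistic logic (no law of excluded middle; a statement ''A or B'' requires a procedure deciding which holds, and existence requires a construction). A geometry $(\mathscr P,\mathscr L)$ consists of a set $\mathscr P$ of points with an equality relation, a set $\mathscr L$ of lines, each line being a subset of $\mathscr P$ (lines are equal iff equal as subsets), and a primitive relation $P\ne Q$ (''distinct points'') on $\mathscr P$, invariant under equality, such that: (c1) $\neg(P\ne P)$; (c2) $P\ne Q$ implies $Q\ne P$; (c3) if $P\ne Q$ then every point $R$ satisfies $R\ne P$ or $R\ne Q$; (c4) $\neg(P\ne Q)$ implies $P=Q$. (The relation $P\ne Q$ is affirmative, not merely the negation of equality.) A point $P$ lies outside a line $l$, written $P\notin l$, if $P\ne Q$ for every $Q\in l$. Lines are distinct, $l\ne m$, if some point of $l$ lies outside $m$ or some point of $m$ lies outside $l$. Lines are nonparallel, $l\nparallel m$, if $l\ne m$ and a point of $l\cap m$ can be exhibited; they are parallel, $l\parallel m$, if $\neg(l\nparallel m)$. Nonparallel lines have a unique common point, denoted $l\cap m$. Axioms: (G1) for distinct points $P,Q$ there is a unique line, denoted $P+Q$, containing both; (G2) for any point $P$ and line $l$ there is a unique line through $P$ parallel to $l$; (G3) there exist distinct points $A,B,C$ with $C\notin A+B$; (L1) if $l\nparallel m$, $P=l\cap m$, and $Q\ne P$, then $Q\notin l$ or $Q\notin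 m$; (L2) if $l\nparallel m$, then every line $n$ satisfies $n\nparallel l$ or $n\nparallel m$. *)

(* Points: a type Pt with (Leibniz) equality and a primitive
   apartness relation [dist] ("distinct points", P != Q).
   Lines: a collection of subsets of Pt, given by [isLine : (Pt -> Prop) -> Prop];
   equality of lines is equality as subsets ([leq]). *)

Section Geometry.
Variables (Pt : Type) (isLine : (Pt -> Prop) -> Prop) (dist : Pt -> Pt -> Prop).

Definition outside (P : Pt) (l : Pt -> Prop) : Prop := forall Q, l Q -> dist P Q.

Definition leq (l m : Pt -> Prop) : Prop := forall P, l P <-> m P.

Definition ldist (l m : Pt -> Prop) : Prop :=
  (exists P, l P /\ outside P m) \/ (exists P, m P /\ outside P l).

Definition nonpar (l m : Pt -> Prop) : Prop :=
  ldist l m /\ exists P, l P /\ m P.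

Definition par (l m : Pt -> Prop) : Prop := ~ nonpar l m.

Record geometry_axioms : Prop := {
  (* the set of lines is a set of subsets: closed under subset equality *)
  line_ext : forall l m, isLine l -> leq l m -> isLine m;
  c1 : forall P, ~ dist P P;
  c2 : forall P Q, dist P Q -> dist Q P;
  c3 : forall P Q, dist P Q -> forall R, dist R P \/ dist R Q;
  c4 : forall P Q, ~ dist P Q -> P = Q;
  G1 : forall P Q, dist P Q ->
         exists l, isLine l /\ l P /\ l Q /\
           forall m, isLine m -> m P -> m Q -> leq m l;
  G2 : forall P l, isLine l ->
         exists m, isLine m /\ m P /\ par m l /\
           forall m', isLine m' -> m' P -> par m' l -> leq m' m;
  G3 : exists A B C, dist A B /\ dist A C /\ dist B C /\
         exists l, isLine l /\ l A /\ l B /\ outside C l;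
  L1 : forall l m P Q, isLine l -> isLine m -> nonpar l m ->
         l P -> m P -> dist Q P -> outside Q l \/ outside Q m;
  L2 : forall l m n, isLine l -> isLine m -> isLine n -> nonpar l m ->
         nonpar n l \/ nonpar n m
}.

End Geometry.


(* Through P draw a line m meeting l: take any line k crossing l and let m be
   the parallel to k through P; by L2 the line m cannot be parallel to both
   k and l, so it meets l in some point R.  If P were apart from R, axiom L1
   would put P outside m (impossible, P lies on m) or outside l (excluded by
   hypothesis); hence P = R by tightness of apartness, and P lies on l. *)

Section Geometry.

Variables (Pt : Type) (isLine : (Pt -> Prop) -> Prop) (dist : Pt -> Pt -> Prop).
Hypothesis H : geometry_axioms Pt isLine dist.

Lemma exists_nonpar_line (l : Pt -> Prop) :
  isLine l -> exists k, isLine k /\ nonpar Pt dist l k.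
Proof.
  intros Hl.
  destruct (G3 _ _ _ H)
    as [A [B [C [_ [dAC [_ [l0 [Hl0 [l0A [_ oC]]]]]]]]]].
  destruct (G1 _ _ _ H C A (c2 _ _ _ H _ _ dAC)) as [k1 [Hk1 [k1C [k1A _]]]].
  assert (Hk1l0 : nonpar Pt dist k1 l0).
  { split.
    - left; exists C; split; assumption.
    - exists A; split; assumption. }
  destruct (L2 _ _ _ H k1 l0 l Hk1 Hl0 Hl Hk1l0) as [N | N]; eauto.
Qed.

Lemma exists_nonpar_line_through (P : Pt) (l : Pt -> Prop) :
  isLine l -> exists m, isLine m /\ m P /\ nonpar Pt dist m l.
Proof.
  intros Hl.
  destruct (exists_nonpar_line l Hl) as [k [Hk Nlk]].
  destruct (G2 _ _ _ H P k Hk) as [m [Hm [mP [mk _]]]].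
  destruct (L2 _ _ _ H l k m Hl Hk Hm Nlk) as [Nml | Nmk].
  - eauto.
  - contradiction.
Qed.

Lemma not_outside_eq_meet (P R : Pt) (l m : Pt -> Prop) :
  isLine l -> isLine m -> nonpar Pt dist m l ->
  m P -> m R -> l R -> ~ outside Pt dist P l -> P = R.
Proof.
  intros Hl Hm Nml mP mR lR notout.
  apply (c4 _ _ _ H); intros dPR.
  destruct (L1 _ _ _ H m l R P Hm Hl Nml mR lR dPR) as [o | o].
  - exact (c1 _ _ _ H P (o P mP)).
  - exact (notout o).
Qed.

End Geometry.

Theorem theorem2p12 (Pt : Type) (isLine : (Pt -> Prop) -> Prop)
  (dist : Pt -> Pt -> Prop) (H : geometry_axioms Pt isLine dist)
  (P : Pt) (l : Pt -> Prop) (Hl : isLine l) :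
  ~ outside Pt dist P l -> l P.
Proof.
  intros notout.
  destruct (exists_nonpar_line_through Pt isLine dist H P l Hl)
    as [m [Hm [mP Nml]]].
  destruct (proj2 Nml) as [R [mR lR]].
  rewrite (not_outside_eq_meet Pt isLine dist H P R l m Hl Hm Nml mP mR lR notout).
  exact lR.
Qed.
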